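(* Let $\mathcal{C}$ be a process theory with discarding. Suppose that for each system $A$ we are given a system $L_A$ and a causal process $p_A : A \to A \otimes L_A$ (a pre-leak) such that (a) $e_A := (\mathrm{id}_A \otimes \top_{L_A}) \circ p_A : A \to A$ is idempotent, $e_A \circ e_A = e_A$, and (b) the choice is coherent for composites: $L_{A\otimes B} = L_A \otimes L_B$ and $p_{A\otimes B} = (\mathrm{id}_A \otimes \sigma_{L_A, B} \otimes \mathrm{id}_{L_B})\circ (p_A \otimes p_B)$. Then the following defines a new process theory with discarding: the systems are those of $\mathcal{C}$; the processes $A \to B$ are exactly the processes of $\mathcal{C}$ of the form $e_B \circ f \circ e_A$ with $f : A \to B$ a process of $\mathcal{C}$; composition is that of $\mathcal{C}$ (so the identity on $A$ is $e_A$); and discarding is $\top_A$ (which satisfies $\top_A \circ e_A = \top_A$). Moreover, in this new theory, the process $(e_A \otimes e_{L_A}) \circ p_A \circ e_A : A \to A \otimes L_A$ is a leak for $A$, i.e. discarding its $L_A$ output yields the new identity $e_A$.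
   Context: A process theory is a strict symmetric monoidal category: objects are systems, morphisms are processes, $\circ$ is sequential composition, $\otimes$ parallel composition, $I$ the unit, $\sigma_{X,Y}$ the symmetry. A process theory with discarding has, for every system $A$, a distinguished effect $\top_A : A \to I$ with $\top_{A\otimes B} = \top_A \otimes \top_B$. A process $f:A\to B$ is causal if $\top_B \circ f = \top_A$. A leak for $A$ in a process theory whose identity on $A$ is $\mathrm{id}_A$ is a process $l : A \to A\otimes L$ with $(\mathrm{id}_A \otimes \top_L)\circ l = \mathrm{id}_A$. *)

(** Transport of a process along equalities of systems (needed because
    strictness of the monoidal structure is stated with propositional
    equalities of objects). *)
Definition castH {Obj : Type} (Hom : Obj -> Obj -> Type) {A A' B B' : Obj}
  (eA : A = A') (eB : B = B') (f : Hom A B) : Hom A' B' :=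
  match eA in _ = X return Hom X B' with
  | eq_refl => match eB in _ = Y return Hom A Y with eq_refl => f end
  end.

Record PTOps (Obj : Type) (Hom : Obj -> Obj -> Type)
    (tens : Obj -> Obj -> Obj) (I : Obj) := {
  comp_ : forall A B C : Obj, Hom B C -> Hom A B -> Hom A C;
  idp_ : forall A : Obj, Hom A A;
  tensh_ : forall A B C D : Obj, Hom A B -> Hom C D -> Hom (tens A C) (tens B D);
  sym_ : forall A B : Obj, Hom (tens A B) (tens B A)
}.

Section Ops.
Context {Obj : Type} {Hom : Obj -> Obj -> Type} {tens : Obj -> Obj -> Obj} {I : Obj}.
Variable P : PTOps Obj Hom tens I.
Definition comp {A B C : Obj} (g : Hom B C) (f : Hom A B) : Hom A C := @comp_ _ _ _ _ P A B C g f.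
Definition idp (A : Obj) : Hom A A := @idp_ _ _ _ _ P A.
Definition tensh {A B C D : Obj} (f : Hom A B) (g : Hom C D) : Hom (tens A C) (tens B D) :=
  @tensh_ _ _ _ _ P A B C D f g.
Definition sym (A B : Obj) : Hom (tens A B) (tens B A) := @sym_ _ _ _ _ P A B.
End Ops.

(** Axioms of a strict symmetric monoidal category. *)
Record IsProcessTheory {Obj : Type} {Hom : Obj -> Obj -> Type}
    {tens : Obj -> Obj -> Obj} {I : Obj} (P : PTOps Obj Hom tens I) : Prop := {
  comp_assoc : forall (A B C D : Obj) (f : Hom A B) (g : Hom B C) (h : Hom C D),
    comp P h (comp P g f) = comp P (comp P h g) f;
  comp_id_l : forall (A B : Obj) (f : Hom A B), comp P (idp P B) f = f;
  comp_id_r : forall (A B : Obj) (f : Hom A B), comp P f (idp P A) = f;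
  tensh_comp : forall (A B C A' B' C' : Obj) (f : Hom A B) (f' : Hom B C)
      (g : Hom A' B') (g' : Hom B' C'),
    tensh P (comp P f' f) (comp P g' g) = comp P (tensh P f' g') (tensh P f g);
  tensh_id : forall A B : Obj, tensh P (idp P A) (idp P B) = idp P (tens A B);
  tens_assoc : forall A B C : Obj, tens A (tens B C) = tens (tens A B) C;
  tens_unit_l : forall A : Obj, tens I A = A;
  tens_unit_r : forall A : Obj, tens A I = A;
  tensh_assoc : forall (A B C A' B' C' : Obj) (f : Hom A A') (g : Hom B B') (h : Hom C C'),
    castH Hom (tens_assoc A B C) (tens_assoc A' B' C') (tensh P f (tensh P g h))
    = tensh P (tensh P f g) h;
  tensh_unit_l : forall (A B : Obj) (f : Hom A B),
    castH Hom (tens_unit_l A) (tens_unit_l B) (tensh P (idp P I) f) = f;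
  tensh_unit_r : forall (A B : Obj) (f : Hom A B),
    castH Hom (tens_unit_r A) (tens_unit_r B) (tensh P f (idp P I)) = f;
  sym_nat : forall (A B C D : Obj) (f : Hom A B) (g : Hom C D),
    comp P (sym P B D) (tensh P f g) = comp P (tensh P g f) (sym P A C);
  sym_inv : forall A B : Obj, comp P (sym P B A) (sym P A B) = idp P (tens A B);
  sym_hex : forall A B C : Obj,
    sym P A (tens B C)
    = castH Hom eq_refl (tens_assoc B C A)
        (comp P (tensh P (idp P B) (sym P A C))
           (castH Hom (eq_sym (tens_assoc A B C)) (eq_sym (tens_assoc B A C))
              (tensh P (sym P A B) (idp P C))));
  sym_unit : forall A : Obj,
    castH Hom (tens_unit_r A) (tens_unit_l A) (sym P A I) = idp P A
}.

Record ProcessTheoryD (Obj : Type) (Hom : Obj -> Obj -> Type)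
    (tens : Obj -> Obj -> Obj) (I : Obj) := {
  pt_ops :> PTOps Obj Hom tens I;
  pt_ax : IsProcessTheory pt_ops;
  top_ : forall A : Obj, Hom A I;
  top_tens : forall A B : Obj,
    top_ (tens A B) = castH Hom eq_refl (@tens_unit_l _ _ _ _ _ pt_ax I) (tensh pt_ops (top_ A) (top_ B))
}.

Section Disc.
Context {Obj : Type} {Hom : Obj -> Obj -> Type} {tens : Obj -> Obj -> Obj} {I : Obj}.
Variable C : ProcessTheoryD Obj Hom tens I.

Definition top (A : Obj) : Hom A I := @top_ _ _ _ _ C A.
Definition unit_r (A : Obj) : tens A I = A := @tens_unit_r _ _ _ _ _ (@pt_ax _ _ _ _ C) A.
Definition assoc (A B D : Obj) : tens A (tens B D) = tens (tens A B) D :=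
  @tens_assoc _ _ _ _ _ (@pt_ax _ _ _ _ C) A B D.

Definition causal {A B : Obj} (f : Hom A B) : Prop := comp C (top B) f = top A.

Definition is_leak {A L : Obj} (l : Hom A (tens A L)) : Prop :=
  comp C (tensh C (idp C A) (top L)) l = castH Hom eq_refl (eq_sym (unit_r A)) (idp C A).

Variable L : Obj -> Obj.
Variable p : forall A : Obj, Hom A (tens A (L A)).

Definition eproj (A : Obj) : Hom A A :=
  castH Hom eq_refl (unit_r A) (comp C (tensh C (idp C A) (top (L A))) (p A)).

Definition restrHom (A B : Obj) : Type :=
  { h : Hom A B | exists f : Hom A B, h = comp C (eproj B) (comp C f (eproj A)) }.

Variable HL : forall A B : Obj, L (tens A B) = tens (L A) (L B).

Definition coh_eq1 (A B : Obj) :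
  tens (tens A (L A)) (tens B (L B)) = tens (tens A (tens (L A) B)) (L B) :=
  eq_trans (assoc (tens A (L A)) B (L B))
    (f_equal (fun X => tens X (L B)) (eq_sym (assoc A (L A) B))).

Definition coh_eq2 (A B : Obj) :
  tens (tens A (tens B (L A))) (L B) = tens (tens A B) (L (tens A B)) :=
  eq_trans (f_equal (fun X => tens X (L B)) (assoc A B (L A)))
    (eq_trans (eq_sym (assoc (tens A B) (L A) (L B)))
       (f_equal (fun X => tens (tens A B) X) (eq_sym (HL A B)))).

(** (id_A ⊗ σ_{L_A,B} ⊗ id_{L_B}) ∘ (p_A ⊗ p_B) *)
Definition coherent_p (A B : Obj) : Hom (tens A B) (tens (tens A B) (L (tens A B))) :=
  castH Hom eq_refl (coh_eq2 A B)
    (comp C (tensh C (tensh C (idp C A) (sym C (L A) B)) (idp C (L B)))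
       (castH Hom eq_refl (coh_eq1 A B) (tensh C (p A) (p B)))).
End Disc.

From Stdlib Require Import ProofIrrelevance Setoid.

(* Coherence makes the idempotents monoidal, e_{A ⊗ B} = e_A ⊗ e_B: discarding L_A ⊗ L_B after
   moving L_A past B is the same as discarding L_A and L_B separately, because σ_{I,B} is trivial.
   Consequently e commutes with every structural process (symmetries, and the transports along
   the equalities of systems that express strictness), so the processes fixed by e, which are
   exactly those of the form e_B ∘ f ∘ e_A, are closed under ∘ and ⊗, and each structural
   process s of C yields the structural process s ∘ e of the new theory, satisfying the same
   equations as s.  Causality of p_A gives ⊤_A ∘ e_A = ⊤_A, so discarding is inherited, and
   discarding the L_A output of (e_A ⊗ e_{L_A}) ∘ p_A ∘ e_A leaves e_A ∘ e_A ∘ e_A = e_A. *)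

Lemma castH_irrelevant {Obj : Type} (Hom : Obj -> Obj -> Type) {A A' B B' : Obj}
  (eA eA' : A = A') (eB eB' : B = B') (f : Hom A B) :
  castH Hom eA eB f = castH Hom eA' eB' f.
Proof. now rewrite (proof_irrelevance _ eA eA'), (proof_irrelevance _ eB eB'). Qed.

Section Transport.
Context {Obj : Type} {Hom : Obj -> Obj -> Type} {tens : Obj -> Obj -> Obj} {I : Obj}.
Variable P : PTOps Obj Hom tens I.
Hypothesis HP : IsProcessTheory P.

Local Notation "g ∘ f" := (comp P g f) (at level 40, left associativity).
Local Notation "f ⊗ g" := (tensh P f g) (at level 35).
Local Notation id := (idp P).

Definition transport {X Y : Obj} (e : X = Y) : Hom X Y := castH Hom eq_refl e (id X).

Lemma postcomp_eq {A B B' D E : Obj} {f : Hom A B} {g : Hom B D} {f' : Hom A B'} {g' : Hom B' D}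
  (H : g ∘ f = g' ∘ f') (h : Hom D E) : h ∘ g ∘ f = h ∘ g' ∘ f'.
Proof. now rewrite <- !(comp_assoc _ HP), H. Qed.

Lemma castH_transport {A A' B B' : Obj} (eA : A = A') (eB : B = B') (f : Hom A B) :
  castH Hom eA eB f = transport eB ∘ (f ∘ transport (eq_sym eA)).
Proof.
  destruct eA, eB; unfold transport; simpl.
  now rewrite (comp_id_l _ HP), (comp_id_r _ HP).
Qed.

Lemma castH_cod {A B B' : Obj} (eB : B = B') (f : Hom A B) :
  castH Hom eq_refl eB f = transport eB ∘ f.
Proof. destruct eB; simpl. now rewrite (comp_id_l _ HP). Qed.

Lemma transport_irrelevant {X Y : Obj} (e e' : X = Y) : transport e = transport e'.
Proof. now rewrite (proof_irrelevance _ e e'). Qed.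

Lemma transport_trans {X Y Z : Obj} (e1 : X = Y) (e2 : Y = Z) :
  transport (eq_trans e1 e2) = transport e2 ∘ transport e1.
Proof. destruct e1, e2; simpl. now rewrite (comp_id_l _ HP). Qed.

Lemma transport_symK {X Y : Obj} (e : X = Y) : transport (eq_sym e) ∘ transport e = id X.
Proof. destruct e; apply (comp_id_l _ HP). Qed.

Lemma transport_Ksym {X Y : Obj} (e : X = Y) : transport e ∘ transport (eq_sym e) = id Y.
Proof. destruct e; apply (comp_id_l _ HP). Qed.

Lemma transport_tens {X Y X' Y' : Obj} (e : X = Y) (e' : X' = Y') :
  transport e ⊗ transport e' = transport (f_equal2 tens e e').
Proof.
  destruct e, e'; rewrite (transport_irrelevant (f_equal2 tens _ _) eq_refl).
  apply (tensh_id _ HP).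
Qed.

Lemma transport_tens_l {X Y : Obj} (Z : Obj) (e : X = Y) :
  transport (f_equal (fun W => tens W Z) e) = transport e ⊗ id Z.
Proof. destruct e; symmetry; apply (tensh_id _ HP). Qed.

Lemma transport_tens_r {X Y : Obj} (Z : Obj) (e : X = Y) :
  transport (f_equal (tens Z) e) = id Z ⊗ transport e.
Proof. destruct e; symmetry; apply (tensh_id _ HP). Qed.

Lemma transport_natural (F : forall X, Hom X X) {X Y : Obj} (e : X = Y) :
  transport e ∘ F X = F Y ∘ transport e.
Proof. destruct e; simpl. now rewrite (comp_id_l _ HP), (comp_id_r _ HP). Qed.

Lemma transport_absorb {Z : Obj} (F : forall X, Hom X Z) {X Y : Obj} (e : X = Y) :
  F Y ∘ transport e = F X.
Proof. destruct e; apply (comp_id_r _ HP). Qed.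

Definition is_transport {X Y : Obj} (h : Hom X Y) : Prop := exists e : X = Y, h = transport e.

Lemma is_transport_eq {X Y : Obj} (h h' : Hom X Y) :
  is_transport h -> is_transport h' -> h = h'.
Proof. intros [e ->] [e' ->]. apply transport_irrelevant. Qed.

Lemma is_transport_transport {X Y : Obj} (e : X = Y) : is_transport (transport e).
Proof. now exists e. Qed.

Lemma is_transport_id (X : Obj) : is_transport (id X).
Proof. now exists eq_refl. Qed.

Lemma is_transport_comp {X Y Z : Obj} (g : Hom Y Z) (f : Hom X Y) :
  is_transport g -> is_transport f -> is_transport (g ∘ f).
Proof. intros [e2 ->] [e1 ->]. exists (eq_trans e1 e2). symmetry; apply transport_trans. Qed.

Lemma is_transport_tensh {X Y X' Y' : Obj} (f : Hom X Y) (g : Hom X' Y') :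
  is_transport f -> is_transport g -> is_transport (f ⊗ g).
Proof. intros [e ->] [e' ->]. exists (f_equal2 tens e e'). apply transport_tens. Qed.

End Transport.

Section Monoidal.
Context {Obj : Type} {Hom : Obj -> Obj -> Type} {tens : Obj -> Obj -> Obj} {I : Obj}.
Variable P : PTOps Obj Hom tens I.
Hypothesis HP : IsProcessTheory P.

Local Notation "g ∘ f" := (comp P g f) (at level 40, left associativity).
Local Notation "f ⊗ g" := (tensh P f g) (at level 35).
Local Notation id := (idp P).
Local Notation tr := (transport P).
Local Notation compA := (comp_assoc _ HP).
Local Notation id_comp := (comp_id_l _ HP).
Local Notation comp_id := (comp_id_r _ HP).
Local Notation α := (tens_assoc _ HP).
Local Notation λ := (tens_unit_l _ HP).
Local Notation ρ := (tens_unit_r _ HP).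

Lemma tensh_split_outer_l {A B D X Y : Obj} (f : Hom A B) (g : Hom B D) (h : Hom X Y) :
  (g ∘ f) ⊗ h = (g ⊗ id Y) ∘ (f ⊗ h).
Proof. now rewrite <- (tensh_comp _ HP), id_comp. Qed.

Lemma tensh_split_inner_l {A B D X Y : Obj} (f : Hom A B) (g : Hom B D) (h : Hom X Y) :
  (g ∘ f) ⊗ h = (g ⊗ h) ∘ (f ⊗ id X).
Proof. now rewrite <- (tensh_comp _ HP), comp_id. Qed.

Lemma tensh_split_outer_r {A B D X Y : Obj} (f : Hom A B) (g : Hom B D) (h : Hom X Y) :
  h ⊗ (g ∘ f) = (id Y ⊗ g) ∘ (h ⊗ f).
Proof. now rewrite <- (tensh_comp _ HP), id_comp. Qed.

Lemma tensh_interchange {A B X Y : Obj} (f : Hom A B) (g : Hom X Y) :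
  f ⊗ g = (f ⊗ id Y) ∘ (id A ⊗ g).
Proof. now rewrite <- (tensh_comp _ HP), id_comp, comp_id. Qed.

Lemma castH_natural {A A' B B' : Obj} (eA : A = A') (eB : B = B') (f : Hom A B) (g : Hom A' B') :
  castH Hom eA eB f = g -> g ∘ tr eA = tr eB ∘ f.
Proof.
  intros <-. rewrite (castH_transport _ HP), <- !compA.
  now rewrite (transport_symK _ HP), comp_id.
Qed.

Lemma castH_natural_sym {A A' B B' : Obj} (eA : A = A') (eB : B = B') (f : Hom A B) (g : Hom A' B') :
  castH Hom eA eB f = g -> f ∘ tr (eq_sym eA) = tr (eq_sym eB) ∘ g.
Proof.
  intros <-. rewrite (castH_transport _ HP), !compA.
  now rewrite (transport_symK _ HP), id_comp.
Qed.

Lemma tensh_assoc_natural {A B D A' B' D' : Obj} (f : Hom A A') (g : Hom B B') (h : Hom D D') :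
  ((f ⊗ g) ⊗ h) ∘ tr (α A B D) = tr (α A' B' D') ∘ (f ⊗ (g ⊗ h)).
Proof. apply castH_natural, (tensh_assoc _ HP). Qed.

Lemma tensh_assoc_natural_sym {A B D A' B' D' : Obj} (f : Hom A A') (g : Hom B B') (h : Hom D D') :
  (f ⊗ (g ⊗ h)) ∘ tr (eq_sym (α A B D)) = tr (eq_sym (α A' B' D')) ∘ ((f ⊗ g) ⊗ h).
Proof. apply castH_natural_sym, (tensh_assoc _ HP). Qed.

Lemma tensh_unit_l_natural {A B : Obj} (f : Hom A B) :
  f ∘ tr (λ A) = tr (λ B) ∘ (id I ⊗ f).
Proof. apply castH_natural, (tensh_unit_l _ HP). Qed.

Lemma tensh_unit_r_natural {A B : Obj} (f : Hom A B) :
  f ∘ tr (ρ A) = tr (ρ B) ∘ (f ⊗ id I).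
Proof. apply castH_natural, (tensh_unit_r _ HP). Qed.

Lemma tensh_unit_r_natural_sym {A B : Obj} (f : Hom A B) :
  (f ⊗ id I) ∘ tr (eq_sym (ρ A)) = tr (eq_sym (ρ B)) ∘ f.
Proof. apply castH_natural_sym, (tensh_unit_r _ HP). Qed.

Lemma sym_unit_r (A : Obj) : sym P A I = tr (eq_sym (λ A)) ∘ tr (ρ A).
Proof.
  pose proof (castH_natural _ _ _ _ (sym_unit _ HP A)) as H; rewrite id_comp in H.
  now rewrite H, compA, (transport_symK _ HP), id_comp.
Qed.

Lemma sym_unit_l (B : Obj) : sym P I B = tr (eq_sym (ρ B)) ∘ tr (λ B).
Proof.
  assert (Hinv : sym P B I ∘ (tr (eq_sym (ρ B)) ∘ tr (λ B)) = id (tens I B)).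
  { rewrite sym_unit_r, !compA, <- (compA _ _ _ _ _ (tr (ρ B))).
    now rewrite (transport_Ksym _ HP), comp_id, (transport_symK _ HP). }
  now rewrite <- (comp_id _ _ (sym P I B)), <- Hinv, compA, (sym_inv _ HP), id_comp.
Qed.

Lemma is_transport_sym_unit_l (B : Obj) : is_transport P (sym P I B).
Proof.
  rewrite sym_unit_l.
  apply (is_transport_comp _ HP); apply is_transport_transport.
Qed.

Lemma tensh_scalar_l {A : Obj} (s : Hom I I) (g : Hom A I) :
  tr (λ I) ∘ (s ⊗ g) = s ∘ g ∘ tr (λ A).
Proof.
  rewrite (tensh_interchange s g), compA, (transport_irrelevant P (λ I) (ρ I)).
  rewrite <- tensh_unit_r_natural, <- compA, (transport_irrelevant P (ρ I) (λ I)).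
  now rewrite <- tensh_unit_l_natural, compA.
Qed.

End Monoidal.

Section Discarding.
Context {Obj : Type} {Hom : Obj -> Obj -> Type} {tens : Obj -> Obj -> Obj} {I : Obj}.
Variable C : ProcessTheoryD Obj Hom tens I.

Local Notation HC := (pt_ax _ _ _ _ C).
Local Notation "g ∘ f" := (comp C g f) (at level 40, left associativity).
Local Notation "f ⊗ g" := (tensh C f g) (at level 35).
Local Notation id := (idp C).
Local Notation tr := (transport C).
Local Notation compA := (comp_assoc _ HC).
Local Notation α := (tens_assoc _ HC).
Local Notation λ := (tens_unit_l _ HC).
Local Notation ρ := (tens_unit_r _ HC).
Local Notation "⊤" := (top C).

Lemma top_tens_transport (X Y : Obj) : ⊤ (tens X Y) = tr (λ I) ∘ (⊤ X ⊗ ⊤ Y).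
Proof. rewrite (top_tens _ _ _ _ C). apply (castH_cod _ HC). Qed.

Definition discard_r (X A : Obj) : Hom (tens A X) A := tr (ρ A) ∘ (id A ⊗ ⊤ X).

Lemma top_discard_r (X A : Obj) : ⊤ A ∘ discard_r X A = ⊤ (tens A X).
Proof.
  unfold discard_r; rewrite compA, (tensh_unit_r_natural _ HC), <- compA.
  rewrite <- (tensh_interchange _ HC), (transport_irrelevant C (ρ I) (λ I)).
  now rewrite top_tens_transport.
Qed.

Definition shuffle (A X B : Obj) : Hom (tens (tens A X) B) (tens (tens A B) X) :=
  tr (α A B X) ∘ (id A ⊗ sym C X B) ∘ tr (eq_sym (α A X B)).

(* The process id_A ⊗ σ_{X,B} ⊗ id_Y of the coherence condition on pre-leaks. *)
Definition exchange (A X B Y : Obj) :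
    Hom (tens (tens A X) (tens B Y)) (tens (tens A B) (tens X Y)) :=
  tr (eq_sym (α (tens A B) X Y)) ∘ (shuffle A X B ⊗ id Y) ∘ tr (α (tens A X) B Y).

Lemma shuffle_natural (A B : Obj) {X X' : Obj} (f : Hom X X') :
  (id (tens A B) ⊗ f) ∘ shuffle A X B = shuffle A X' B ∘ ((id A ⊗ f) ⊗ id B).
Proof.
  assert (Hsym : (id A ⊗ (id B ⊗ f)) ∘ (id A ⊗ sym C X B)
                 = (id A ⊗ sym C X' B) ∘ (id A ⊗ (f ⊗ id B))).
  { now rewrite <- !(tensh_comp _ HC), (sym_nat _ HC). }
  unfold shuffle; rewrite <- (tensh_id _ HC A B), !compA.
  rewrite (tensh_assoc_natural _ HC), (postcomp_eq _ HC Hsym).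
  now rewrite (postcomp_eq _ HC (tensh_assoc_natural_sym _ HC _ _ _)), ?compA.
Qed.

Lemma exchange_natural (A B : Obj) {X X' Y Y' : Obj} (f : Hom X X') (g : Hom Y Y') :
  (id (tens A B) ⊗ (f ⊗ g)) ∘ exchange A X B Y
  = exchange A X' B Y' ∘ ((id A ⊗ f) ⊗ (id B ⊗ g)).
Proof.
  unfold exchange; rewrite !compA, (tensh_assoc_natural_sym _ HC).
  rewrite <- (compA _ _ _ _ _ ((id (tens A B) ⊗ f) ⊗ g)), <- (tensh_split_inner_l _ HC).
  rewrite shuffle_natural, (tensh_split_outer_l _ HC), <- !compA.
  now rewrite (tensh_assoc_natural _ HC).
Qed.

Lemma exchange_unit (A B : Obj) :
  tr (ρ (tens A B)) ∘ (id (tens A B) ⊗ tr (λ I)) ∘ exchange A I B I = tr (ρ A) ⊗ tr (ρ B).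
Proof.
  apply (is_transport_eq C); unfold exchange, shuffle;
  repeat first [ apply (is_transport_comp _ HC) | apply (is_transport_tensh _ HC)
               | apply is_transport_transport | apply is_transport_id
               | apply (is_transport_sym_unit_l _ HC) ].
Qed.

Lemma discard_exchange (A X B Y : Obj) :
  discard_r (tens X Y) (tens A B) ∘ exchange A X B Y = discard_r X A ⊗ discard_r Y B.
Proof.
  unfold discard_r; rewrite top_tens_transport, (tensh_split_outer_r _ HC), !(tensh_comp _ HC).
  rewrite <- !compA, exchange_natural, !compA.
  now rewrite exchange_unit.
Qed.

End Discarding.

Section RestrictedTheory.
Context {Obj : Type} {Hom : Obj -> Obj -> Type} {tens : Obj -> Obj -> Obj} {I : Obj}.
Variable C : ProcessTheoryD Obj Hom tens I.
Variable L : Obj -> Obj.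
Variable p : forall A : Obj, Hom A (tens A (L A)).
Hypothesis Hcausal : forall A : Obj, causal C (p A).
Hypothesis Hidem : forall A : Obj, comp C (eproj C L p A) (eproj C L p A) = eproj C L p A.
Variable HL : forall A B : Obj, L (tens A B) = tens (L A) (L B).
Hypothesis Hp : forall A B : Obj, p (tens A B) = coherent_p C L p HL A B.

Local Notation HC := (pt_ax _ _ _ _ C).
Local Notation "g ∘ f" := (comp C g f) (at level 40, left associativity).
Local Notation "f ⊗ g" := (tensh C f g) (at level 35).
Local Notation id := (idp C).
Local Notation tr := (transport C).
Local Notation compA := (comp_assoc _ HC).
Local Notation id_comp := (comp_id_l _ HC).
Local Notation comp_id := (comp_id_r _ HC).
Local Notation λ := (tens_unit_l _ HC).
Local Notation ρ := (tens_unit_r _ HC).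
Local Notation "⊤" := (top C).
Local Notation e := (eproj C L p).
Local Notation RH := (restrHom C L p).

Lemma eproj_discard (A : Obj) : e A = discard_r C (L A) A ∘ p A.
Proof. unfold eproj, discard_r, unit_r. rewrite (castH_cod _ HC). apply compA. Qed.

Lemma coherent_pE (A B : Obj) :
  coherent_p C L p HL A B
  = tr (f_equal (tens (tens A B)) (eq_sym (HL A B))) ∘ exchange C A (L A) B (L B) ∘ (p A ⊗ p B).
Proof.
  unfold coherent_p, coh_eq2, coh_eq1, exchange, shuffle, assoc.
  rewrite !(castH_cod _ HC), !(transport_trans _ HC), !(transport_tens_l _ HC).
  rewrite !(tensh_split_outer_l _ HC), !compA.
  reflexivity.
Qed.

Lemma eproj_tens (A B : Obj) : e (tens A B) = e A ⊗ e B.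
Proof.
  rewrite !eproj_discard, Hp, coherent_pE, !compA.
  unfold discard_r at 1; rewrite <- (compA _ _ _ _ _ (id (tens A B) ⊗ ⊤ _)).
  rewrite (transport_tens_r _ HC), <- (tensh_comp _ HC), id_comp, (transport_absorb _ HC (top C)).
  now rewrite (discard_exchange C), (tensh_comp _ HC).
Qed.

Lemma top_eproj (A : Obj) : ⊤ A ∘ e A = ⊤ A.
Proof. now rewrite eproj_discard, compA, (top_discard_r C), Hcausal. Qed.

(* Scalars absorb e_I because e_{I ⊗ A} = e_I ⊗ e_A. *)
Lemma eproj_unit_comp {A : Obj} (g : Hom A I) : g ∘ e A = g -> e I ∘ g = g.
Proof.
  intros Hg.
  assert (HeA : e A = tr (λ A) ∘ (e I ⊗ e A) ∘ tr (eq_sym (λ A))).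
  { rewrite <- eproj_tens, (transport_natural _ HC e), <- compA.
    now rewrite (transport_Ksym _ HC), comp_id. }
  symmetry; rewrite <- Hg at 1; rewrite HeA, !compA, (tensh_unit_l_natural _ HC).
  rewrite <- (compA _ _ _ _ _ (id I ⊗ g)), <- (tensh_comp _ HC), id_comp, Hg.
  rewrite (tensh_scalar_l _ HC), <- compA, (transport_Ksym _ HC).
  apply comp_id.
Qed.

Definition eproj_commutes {X Y : Obj} (s : Hom X Y) : Prop := e Y ∘ s = s ∘ e X.

Lemma eproj_commutes_id (X : Obj) : eproj_commutes (id X).
Proof. unfold eproj_commutes; now rewrite id_comp, comp_id. Qed.

Lemma eproj_commutes_transport {X Y : Obj} (q : X = Y) : eproj_commutes (tr q).
Proof. symmetry; apply (transport_natural _ HC e). Qed.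

Lemma eproj_commutes_comp {X Y Z : Obj} (t : Hom Y Z) (s : Hom X Y) :
  eproj_commutes t -> eproj_commutes s -> eproj_commutes (t ∘ s).
Proof. unfold eproj_commutes; intros Ht Hs. now rewrite compA, Ht, <- compA, Hs, compA. Qed.

Lemma eproj_commutes_tensh {X Y X' Y' : Obj} (s : Hom X Y) (t : Hom X' Y') :
  eproj_commutes s -> eproj_commutes t -> eproj_commutes (s ⊗ t).
Proof.
  unfold eproj_commutes; intros Hs Ht.
  now rewrite !eproj_tens, <- !(tensh_comp _ HC), Hs, Ht.
Qed.

Lemma eproj_commutes_sym (X Y : Obj) : eproj_commutes (sym C X Y).
Proof. unfold eproj_commutes; rewrite !eproj_tens; symmetry; apply (sym_nat _ HC). Qed.

Lemma eproj_commutes_castH {X X' Y Y' : Obj} (qX : X = X') (qY : Y = Y') (s : Hom X Y) :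
  eproj_commutes s -> eproj_commutes (castH Hom qX qY s).
Proof.
  intros Hs; rewrite (castH_transport _ HC).
  repeat apply eproj_commutes_comp; auto using eproj_commutes_transport.
Qed.

Lemma comp_eproj {X Y Z : Obj} (t : Hom Y Z) (s : Hom X Y) :
  eproj_commutes s -> (t ∘ e Y) ∘ (s ∘ e X) = (t ∘ s) ∘ e X.
Proof. intros Hs. now rewrite compA, <- (compA _ _ _ _ _ (e Y)), Hs, compA, <- compA, Hidem. Qed.

Lemma tensh_eproj {X Y X' Y' : Obj} (s : Hom X Y) (t : Hom X' Y') :
  (s ∘ e X) ⊗ (t ∘ e X') = (s ⊗ t) ∘ e (tens X X').
Proof. now rewrite eproj_tens, (tensh_comp _ HC). Qed.

Lemma castH_eproj {X X' Y Y' : Obj} (qX : X = X') (qY : Y = Y') (s : Hom X Y) :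
  castH Hom qX qY (s ∘ e X) = castH Hom qX qY s ∘ e X'.
Proof.
  rewrite !(castH_transport _ HC), <- !compA.
  now rewrite <- (transport_natural _ HC e).
Qed.

Definition fixed {A B : Obj} (h : Hom A B) : Prop := e B ∘ (h ∘ e A) = h.

Lemma fixed_sandwich {A B : Obj} (f : Hom A B) : fixed (e B ∘ (f ∘ e A)).
Proof. unfold fixed; rewrite !compA, Hidem, <- !compA, Hidem. reflexivity. Qed.

Lemma restrHom_fixed {A B : Obj} (h : RH A B) : fixed (proj1_sig h).
Proof. destruct h as [h [f ->]]; apply fixed_sandwich. Qed.

Lemma fixed_l {A B : Obj} (h : Hom A B) : fixed h -> e B ∘ h = h.
Proof. intros Hh; rewrite <- Hh at 1; now rewrite compA, Hidem. Qed.

Lemma fixed_r {A B : Obj} (h : Hom A B) : fixed h -> h ∘ e A = h.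
Proof. intros Hh; rewrite <- Hh at 1; now rewrite <- !compA, Hidem. Qed.

Definition restrict {A B : Obj} {h : Hom A B} (Hh : fixed h) : RH A B :=
  exist _ h (ex_intro _ h (eq_sym Hh)).

Lemma fixed_comp {A B D : Obj} (g : Hom B D) (f : Hom A B) :
  fixed g -> fixed f -> fixed (g ∘ f).
Proof. intros Hg Hf; unfold fixed; now rewrite !compA, (fixed_l g), <- compA, (fixed_r f). Qed.

Lemma fixed_tensh {A B A' B' : Obj} (f : Hom A B) (g : Hom A' B') :
  fixed f -> fixed g -> fixed (f ⊗ g).
Proof. intros Hf Hg; unfold fixed; now rewrite !eproj_tens, <- !(tensh_comp _ HC), Hf, Hg. Qed.

Lemma fixed_eproj (A : Obj) : fixed (e A).
Proof. unfold fixed; now rewrite !Hidem. Qed.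

Lemma fixed_structural {X Y : Obj} (s : Hom X Y) : eproj_commutes s -> fixed (s ∘ e X).
Proof. intros Hs; unfold fixed; now rewrite <- compA, Hidem, compA, Hs, <- compA, Hidem. Qed.

Lemma fixed_top (A : Obj) : fixed (⊤ A).
Proof. unfold fixed; rewrite top_eproj; apply eproj_unit_comp, top_eproj. Qed.

Definition restr_comp (A B D : Obj) (g : RH B D) (f : RH A B) : RH A D :=
  restrict (fixed_comp _ _ (restrHom_fixed g) (restrHom_fixed f)).

Definition restr_tensh (A B A' B' : Obj) (f : RH A B) (g : RH A' B') : RH (tens A A') (tens B B') :=
  restrict (fixed_tensh _ _ (restrHom_fixed f) (restrHom_fixed g)).

Definition restrOps : PTOps Obj RH tens I :=
  Build_PTOps Obj RH tens I restr_comp (fun A => restrict (fixed_eproj A)) restr_tensh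
    (fun A B => restrict (fixed_structural _ (eproj_commutes_sym A B))).

Lemma restr_ext {A B : Obj} (h h' : RH A B) : proj1_sig h = proj1_sig h' -> h = h'.
Proof.
  destruct h as [h Hh], h' as [h' Hh']; simpl; intros <-.
  f_equal; apply proof_irrelevance.
Qed.

Lemma proj1_castH {A A' B B' : Obj} (qA : A = A') (qB : B = B') (h : RH A B) :
  proj1_sig (castH RH qA qB h) = castH Hom qA qB (proj1_sig h).
Proof. now destruct qA, qB. Qed.

Lemma fixed_tensh_unit_l {A B : Obj} (f : Hom A B) :
  fixed f -> castH Hom (λ A) (λ B) (e I ⊗ f) = f.
Proof.
  intros Hf; rewrite <- (fixed_r f Hf) at 1; rewrite <- (id_comp _ _ (e I)).
  now rewrite tensh_eproj, castH_eproj, (tensh_unit_l _ HC), (fixed_r f Hf).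
Qed.

Lemma fixed_tensh_unit_r {A B : Obj} (f : Hom A B) :
  fixed f -> castH Hom (ρ A) (ρ B) (f ⊗ e I) = f.
Proof.
  intros Hf; rewrite <- (fixed_r f Hf) at 1; rewrite <- (id_comp _ _ (e I)).
  now rewrite tensh_eproj, castH_eproj, (tensh_unit_r _ HC), (fixed_r f Hf).
Qed.

Lemma sym_nat_fixed {A B A' B' : Obj} (f : Hom A B) (g : Hom A' B') :
  fixed f -> fixed g -> sym C B B' ∘ e (tens B B') ∘ (f ⊗ g) = (g ⊗ f) ∘ (sym C A A' ∘ e (tens A A')).
Proof.
  intros Hf Hg; pose proof (eproj_commutes_sym A A') as Hs; unfold eproj_commutes in Hs.
  rewrite <- compA, (fixed_l _ (fixed_tensh f g Hf Hg)), (sym_nat _ HC).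
  now rewrite <- Hs, compA, (fixed_r _ (fixed_tensh g f Hg Hf)).
Qed.

Lemma sym_inv_eproj (A B : Obj) :
  sym C B A ∘ e (tens B A) ∘ (sym C A B ∘ e (tens A B)) = e (tens A B).
Proof. now rewrite comp_eproj, (sym_inv _ HC), id_comp by apply eproj_commutes_sym. Qed.

Lemma sym_unit_eproj (A : Obj) :
  castH Hom (ρ A) (λ A) (sym C A I ∘ e (tens A I)) = e A.
Proof. now rewrite castH_eproj, (sym_unit _ HC), id_comp. Qed.

Lemma sym_hex_eproj (A B D : Obj) :
  sym C A (tens B D) ∘ e (tens A (tens B D))
  = castH Hom eq_refl (tens_assoc _ HC B D A)
      ((e B ⊗ (sym C A D ∘ e (tens A D)))
       ∘ castH Hom (eq_sym (tens_assoc _ HC A B D)) (eq_sym (tens_assoc _ HC B A D))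
           ((sym C A B ∘ e (tens A B)) ⊗ e D)).
Proof.
  rewrite <- (id_comp _ _ (e B)), <- (id_comp _ _ (e D)), !tensh_eproj, castH_eproj.
  rewrite comp_eproj, castH_eproj, <- (sym_hex _ HC); [reflexivity |].
  apply eproj_commutes_castH, eproj_commutes_tensh;
    [apply eproj_commutes_sym | apply eproj_commutes_id].
Qed.

Lemma restr_axioms : IsProcessTheory restrOps.
Proof.
  refine (Build_IsProcessTheory _ _ _ _ restrOps _ _ _ _ _
            (tens_assoc _ HC) λ ρ _ _ _ _ _ _ _); intros;
    apply restr_ext; rewrite ?proj1_castH.
  - apply compA.
  - apply fixed_l, restrHom_fixed.
  - apply fixed_r, restrHom_fixed.
  - apply (tensh_comp _ HC).
  - symmetry; apply eproj_tens.
  - apply (tensh_assoc _ HC).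
  - apply fixed_tensh_unit_l, restrHom_fixed.
  - apply fixed_tensh_unit_r, restrHom_fixed.
  - apply sym_nat_fixed; apply restrHom_fixed.
  - apply sym_inv_eproj.
  - change (proj1_sig (comp restrOps ?g ?f)) with (proj1_sig g ∘ proj1_sig f).
    rewrite proj1_castH; apply sym_hex_eproj.
  - apply sym_unit_eproj.
Qed.

Definition restrTheory : ProcessTheoryD Obj RH tens I.
Proof.
  refine (Build_ProcessTheoryD _ _ _ _ restrOps restr_axioms
            (fun A => restrict (fixed_top A)) _).
  intros A B; apply restr_ext; rewrite proj1_castH.
  exact (eq_trans (top_tens _ _ _ _ C A B) (castH_irrelevant Hom _ _ _ _ _)).
Defined.

Definition leak (A : Obj) : RH A (tens A (L A)) :=
  exist _ ((e A ⊗ e (L A)) ∘ (p A ∘ e A))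
    (ex_intro _ (p A) (f_equal (fun h => h ∘ (p A ∘ e A)) (eq_sym (eproj_tens A (L A))))).

Lemma leak_is_leak (A : Obj) : is_leak restrTheory (leak A).
Proof.
  unfold is_leak; apply restr_ext; rewrite proj1_castH.
  change ((e A ⊗ ⊤ (L A)) ∘ ((e A ⊗ e (L A)) ∘ (p A ∘ e A))
          = castH Hom eq_refl (eq_sym (unit_r restrTheory A)) (e A)).
  rewrite (castH_cod _ HC), (transport_irrelevant C _ (eq_sym (ρ A))).
  rewrite compA, <- (tensh_comp _ HC), Hidem, top_eproj, (tensh_interchange _ HC).
  assert (Hp_discard : (id A ⊗ ⊤ (L A)) ∘ p A = tr (eq_sym (ρ A)) ∘ e A).
  { rewrite eproj_discard; unfold discard_r.
    now rewrite !compA, (transport_symK _ HC), id_comp. }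
  rewrite <- compA, (compA _ _ _ _ _ _ (id A ⊗ ⊤ (L A))), Hp_discard.
  now rewrite !compA, (tensh_unit_r_natural_sym _ HC), <- !compA, !Hidem.
Qed.

End RestrictedTheory.

Theorem theorem1 (Obj : Type) (Hom : Obj -> Obj -> Type)
  (tens : Obj -> Obj -> Obj) (I : Obj) (C : ProcessTheoryD Obj Hom tens I)
  (L : Obj -> Obj) (p : forall A : Obj, Hom A (tens A (L A)))
  (Hcausal : forall A : Obj, causal C (p A))
  (Hidem : forall A : Obj,
     comp C (eproj C L p A) (eproj C L p A) = eproj C L p A)
  (HL : forall A B : Obj, L (tens A B) = tens (L A) (L B))
  (Hp : forall A B : Obj, p (tens A B) = coherent_p C L p HL A B) :
  exists D : ProcessTheoryD Obj (restrHom C L p) tens I,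
    (forall (A B E : Obj) (g : restrHom C L p B E) (f : restrHom C L p A B),
        proj1_sig (comp D g f) = comp C (proj1_sig g) (proj1_sig f))
    /\ (forall A : Obj, proj1_sig (idp D A) = eproj C L p A)
    /\ (forall (A B A' B' : Obj) (f : restrHom C L p A B) (g : restrHom C L p A' B'),
        proj1_sig (tensh D f g) = tensh C (proj1_sig f) (proj1_sig g))
    /\ (forall A B : Obj,
        proj1_sig (sym D A B) = comp C (sym C A B) (eproj C L p (tens A B)))
    /\ (forall A : Obj, proj1_sig (top D A) = top C A)
    /\ (forall A : Obj, comp C (top C A) (eproj C L p A) = top C A)
    /\ (forall A : Obj, exists l : restrHom C L p A (tens A (L A)),
          proj1_sig l
            = comp C (tensh C (eproj C L p A) (eproj C L p (L A)))
                (comp C (p A) (eproj C L p A))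
          /\ is_leak D l).
Proof.
  exists (restrTheory C L p Hcausal Hidem HL Hp).
  split; [| split; [| split; [| split; [| split; [| split]]]]]; intros; try reflexivity.
  - exact (top_eproj C L p Hcausal A).
  - exists (leak C L p HL Hp A).
    split; [reflexivity | apply leak_is_leak].
Qed.
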